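(* For every even $n$ and integers $1\le k\le\frac n2$, $1\le i\le\frac n2$, $$\sum_{j=0}^{k}\binom{(n-2i)/2}{j}_{q^2}q^{2(k-j)^2-(k-j)+(n-1)j-1}\frac{(q^{n+2-4k+2j};q^2)_{2k-2j}}{(q;q)_{2k-2j}} =q^{2k^2-k-1}\sum_{r=0}^{2k}\binom{n-2i}{r}_q\,q^{(2k-r)(n-2i-r)}\frac{\prod_{j=i+r+1-2k}^{i}(1-q^{2j})}{\prod_{j=1}^{2k-r}(1-q^j)}$$ as an identity of rational functions in $q$.
   Context: $(x;t)_m=\prod_{j=0}^{m-1}(1-xt^j)$ and $\binom{c}{d}_t=\prod_{j=0}^{d-1}\frac{1-t^{c-j}}{1-t^{j+1}}$ (equal to $0$ if $d>c\ge0$). Products over empty ranges equal $1$. *)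

From mathcomp Require Import all_boot all_order all_algebra.
From mathcomp Require Import fraction.
Set Implicit Arguments. Unset Strict Implicit. Unset Printing Implicit Defensive.
Import Order.TTheory GRing.Theory Num.Theory.
Local Open Scope ring_scope.

Definition qpoch (F : fieldType) (x t : F) (m : nat) : F :=
  \prod_(j < m) (1 - x * t ^+ j).

(* Gaussian binomial: prod_{j=0}^{d-1} (1 - t^{c-j}) / (1 - t^{j+1});
   the factor j = c vanishes, so this is 0 when d > c >= 0. *)
Definition qbinom (F : fieldType) (t : F) (c d : nat) : F :=
  \prod_(j < d) ((1 - t ^ (c%:Z - j%:Z)) / (1 - t ^+ j.+1)).

Definition qX : {fraction {poly rat}} := FracField.tofrac ('X : {poly rat}).

From mathcomp Require Import all_boot all_order all_algebra.
From mathcomp Require Import fraction.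
From mathcomp Require Import zify.
From mathcomp.algebra_tactics Require Import ring.
Import Order.TTheory GRing.Theory Num.Theory.
Set Implicit Arguments. Unset Strict Implicit.
Local Open Scope ring_scope.

(* Put x = q^(2i), N = 2k, n - 2i = 2a and T_y(M) = (y q^(2-2M); q^2)_M / (q;q)_M,
   extended by 0 to M < 0 ([qterm]).  The right-hand sum is
     S_A(N) = sum_r [A, r]_q q^((N-r)(A-r)) T_x(N-r)   at A = 2a   ([qsum]),
   and, after pulling out q^(2k^2-k-1), the left-hand sum is
     L_a(N) = sum_j [a, j]_(q^2) q^(2j(j+a-N)) x^j T_(x q^(2(a-j)))(N-2j)   ([q2sum]).
   Applying the q-Pascal rule twice expresses S_(A+2)(N) through S_A(N), S_A(N-1)
   and S_A(N-2).  The q^2-Pascal rule, combined with a three-term relation between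
   T_y and T_(y q^2), shows that L_(a+1) obeys the same recurrence in terms of L_a;
   as L_0 = S_0, induction on a gives L_a = S_(2a). *)

Lemma qbinom0 (F : fieldType) (t : F) c : qbinom t c 0 = 1.
Proof. by rewrite /qbinom big_ord0. Qed.

Lemma qbinom_small (F : fieldType) (t : F) c d : (c < d)%N -> qbinom t c d = 0.
Proof.
by move=> lt_cd; rewrite /qbinom (bigD1 (Ordinal lt_cd)) //= subrr expr0z subrr !mul0r.
Qed.

Lemma qpoch0 (F : fieldType) (x t : F) : qpoch x t 0 = 1.
Proof. by rewrite /qpoch big_ord0. Qed.

Lemma qpochS (F : fieldType) (x t : F) m :
  qpoch x t m.+1 = (1 - x) * qpoch (x * t) t m.
Proof.
rewrite /qpoch big_ord_recl expr0 mulr1; congr (_ * _).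
by apply: eq_bigr => j _; rewrite /= exprS mulrA.
Qed.

Lemma qpochSr (F : fieldType) (x t : F) m :
  qpoch x t m.+1 = qpoch x t m * (1 - x * t ^+ m).
Proof. by rewrite /qpoch big_ord_recr. Qed.

Lemma qbinomSr (F : fieldType) (t : F) c d :
  qbinom t c d.+1 = qbinom t c d * ((1 - t ^ (c%:Z - d%:Z)) / (1 - t ^+ d.+1)).
Proof. by rewrite /qbinom big_ord_recr. Qed.

Lemma qbinomSS (F : fieldType) (t : F) c d :
  qbinom t c.+1 d.+1 = (1 - t ^+ c.+1) / (1 - t ^+ d.+1) * qbinom t c d.
Proof.
rewrite /qbinom !prodf_div big_ord_recl big_ord_recr /= subr0 -exprnP.
rewrite mulf_div [X in _ / X]mulrC; congr (_ * _ / _); apply: eq_bigr => j _.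
by congr (1 - t ^ _); rewrite /bump /=; lia.
Qed.

Section QTerm.

Variables (F : fieldType) (q : F).

Definition qterm (y : F) (M : int) : F :=
  match M with
  | Posz m => qpoch (y * q ^ (2 * (1 - m%:Z))) (q ^+ 2) m / qpoch q q m
  | Negz _ => 0
  end.

Lemma qterm_neg y M : M < 0 -> qterm y M = 0.
Proof. by case: M. Qed.

Lemma qterm0 y : qterm y 0%N = 1.
Proof. by rewrite /qterm /= !qpoch0 divr1. Qed.

Hypothesis q_neq0 : q != 0.
Hypothesis q_nonroot : forall m, (0 < m)%N -> 1 - q ^+ m != 0.

Lemma qpoch_qq_neq0 m : qpoch q q m != 0.
Proof. by apply/prodf_neq0 => j _; rewrite -exprS q_nonroot. Qed.

Lemma qbinomS c d : qbinom q c.+1 d.+1 = q ^+ d.+1 * qbinom q c d.+1 + qbinom q c d.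
Proof.
have split_exp : q ^+ c.+1 = q ^+ d.+1 * q ^ (c%:Z - d%:Z).
  by rewrite !exprnP -expfzDr //; congr (_ ^ _); lia.
rewrite qbinomSS qbinomSr split_exp.
by field; rewrite q_nonroot.
Qed.

Lemma qtermS y (p : nat) :
  qterm y p.+1 = (1 - y / q ^+ (2 * p)) / (1 - q ^+ p.+1) * qterm y p.
Proof.
rewrite /qterm qpochS qpochSr -exprS.
have -> : y * q ^ (2 * (1 - p.+1%:Z)) = y / q ^+ (2 * p).
  by rewrite exprnP invr_expz; congr (_ * _ ^ _); lia.
have -> : y / q ^+ (2 * p) * q ^+ 2 = y * q ^ (2 * (1 - p%:Z)).
  by rewrite -mulrA !exprnP invr_expz -expfzDr //; congr (_ * _ ^ _); lia.
by field; rewrite qpoch_qq_neq0 q_nonroot // expf_neq0.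
Qed.

Lemma qterm_mulq2 y (p : nat) :
  qterm (y * q ^+ 2) p.+1 = (1 - y * q ^+ 2) / (1 - q ^+ p.+1) * qterm y p.
Proof.
rewrite /qterm qpochSr [qpoch q q _]qpochSr -exprS.
have -> : y * q ^+ 2 * q ^ (2 * (1 - p.+1%:Z)) = y * q ^ (2 * (1 - p%:Z)).
  by rewrite -mulrA exprnP -expfzDr //; congr (_ * _ ^ _); lia.
have -> : y * q ^ (2 * (1 - p%:Z)) * (q ^+ 2) ^+ p = y * q ^+ 2.
  by rewrite -mulrA -exprM !exprnP -expfzDr //; congr (_ * _ ^ _); lia.
by field; rewrite qpoch_qq_neq0 q_nonroot.
Qed.

Lemma qterm_rec y M :
  q ^ (2 * M) * qterm y M + (1 + q) * q ^ (M - 1) * qterm y (M - 1) + qterm y (M - 2)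
  = qterm (y * q ^+ 2) M + q ^ (2 * (2 - M)) * y * qterm y (M - 2).
Proof.
have q1_neq0 : 1 - q != 0 by rewrite -[q in 1 - q]expr1 q_nonroot.
case: M => [[|[|p]]|m]; last by rewrite !qterm_neg ?mulr0 ?addr0 //; lia.
- rewrite (@qterm_neg y (Posz 0 - 1)) // (@qterm_neg y (Posz 0 - 2)) // !qterm0.
  by rewrite !mulr0 !addr0 expr0z mul1r.
- rewrite (@qterm_neg y (Posz 1 - 2)) // (_ : Posz 1 - 1 = 0%N) // qtermS qterm_mulq2 qterm0.
  rewrite !mulr0 !addr0 expr0z !mulr1 -exprnP muln0 expr0 divr1 expr1.
  by field.
have -> : Posz p.+2 - 1 = p.+1 by lia.
have -> : Posz p.+2 - 2 = p by lia.
rewrite qtermS qtermS qterm_mulq2 qtermS.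
set P := q ^+ p.
have e2p : q ^+ (2 * p) = P ^+ 2 by rewrite mulnC exprM.
have e2p2 : q ^+ (2 * p.+1) = P ^+ 2 * q ^+ 2 by rewrite mulnS exprD e2p mulrC.
have ep1 : q ^+ p.+1 = P * q by rewrite exprSr.
have ep2 : q ^+ p.+2 = P * q ^+ 2 by rewrite -addn2 exprD.
have ep1z : q ^ p.+1%:Z = P * q by rewrite -exprnP ep1.
have e2p4z : q ^ (2 * p.+2%:Z) = P ^+ 2 * q ^+ 4.
  by rewrite -e2p -exprD exprnP; congr (_ ^ _); lia.
have eNz : q ^ (2 * (2 - p.+2%:Z)) = (P ^+ 2)^-1.
  by rewrite -e2p exprnP invr_expz; congr (_ ^ _); lia.
rewrite e2p e2p2 ep1 ep2 ep1z e2p4z eNz.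
have P_neq0 : P != 0 by rewrite expf_neq0.
have qP1 : 1 - P * q != 0 by rewrite -ep1 q_nonroot.
have qP2 : 1 - P * q ^+ 2 != 0 by rewrite -ep2 q_nonroot.
by field; rewrite P_neq0 qP1 qP2 q_neq0.
Qed.

End QTerm.

Lemma big_ord_pascal (V : zmodType) n (f g h : nat -> V) :
  f 0%N = g 0%N -> (forall r, f r.+1 = g r.+1 + h r) -> g n.+1 = 0 ->
  \sum_(r < n.+2) f r = \sum_(r < n.+1) (g r + h r).
Proof.
move=> f0 fS gn; rewrite big_ord_recl f0 big_split /=.
under eq_bigr do rewrite fS.
by rewrite big_split /= addrA -(big_ord_recl _ g) big_ord_recr /= gn addr0.
Qed.

Lemma eq_sum_ord_support (V : zmodType) (f : nat -> V) m1 m2 :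
  (forall j, (minn m1 m2 <= j)%N -> f j = 0) ->
  \sum_(j < m1) f j = \sum_(j < m2) f j.
Proof.
wlog le_m12 : m1 m2 / (m1 <= m2)%N.
  move=> W f0; case: (leqP m1 m2) => [|/ltnW] le_m; first exact: W.
  by symmetry; apply: W => // j; rewrite minnC; apply: f0.
move=> f0; rewrite -!(big_mkord xpredT) (big_cat_nat (leq0n m1) le_m12) /=.
rewrite [X in _ + X]big1_seq ?addr0 // => j /andP[_].
by rewrite mem_index_iota => /andP[le_m1j _]; apply: f0; rewrite geq_min le_m1j.
Qed.

Section QSums.

Variables (F : fieldType) (q x : F).

Definition qsum_term A N r : F :=
  qbinom q A r * q ^ ((N - r%:Z) * (A%:Z - r%:Z)) * qterm q x (N - r%:Z).

Definition qsum A N : F := \sum_(r < A.+1) qsum_term A N r.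

Definition q2sum_term a N j : F :=
  qbinom (q ^+ 2) a j * q ^ (2 * (j%:Z * (j%:Z + a%:Z - N))) * x ^+ j
  * qterm q (x * q ^ (2 * (a%:Z - j%:Z))) (N - 2 * j%:Z).

Definition q2sum a N : F := \sum_(j < a.+1) q2sum_term a N j.

Lemma qsum_trunc A (K : nat) : qsum A K = \sum_(r < K.+1) qsum_term A K r.
Proof.
apply: eq_sum_ord_support => r; rewrite geq_min => /orP[lt_Ar | lt_Kr].
  by rewrite /qsum_term qbinom_small // !mul0r.
by rewrite /qsum_term qterm_neg ?mulr0 //; lia.
Qed.

Lemma q2sum_trunc a (k : nat) :
  q2sum a (2 * k)%N = \sum_(j < k.+1) q2sum_term a (2 * k)%N j.
Proof.
apply: eq_sum_ord_support => j; rewrite geq_min => /orP[lt_aj | lt_kj].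
  by rewrite /q2sum_term qbinom_small // !mul0r.
by rewrite /q2sum_term qterm_neg ?mulr0 //; lia.
Qed.

Hypothesis q_neq0 : q != 0.
Hypothesis q_nonroot : forall m, (0 < m)%N -> 1 - q ^+ m != 0.

Lemma qsum_term_S0 A N : qsum_term A.+1 N 0 = q ^ N * qsum_term A N 0.
Proof.
rewrite /qsum_term !qbinom0 !mul1r mulrA -expfzDr //.
by congr (_ ^ _ * _); rewrite intS; ring.
Qed.

Lemma qsum_term_SS A N r :
  qsum_term A.+1 N r.+1 = q ^ N * qsum_term A N r.+1 + qsum_term A (N - 1) r.
Proof.
have eN : N - r.+1%:Z = N - 1 - r%:Z by lia.
have eA : A.+1%:Z - r.+1%:Z = A%:Z - r%:Z by lia.
have ex : q ^+ r.+1 * q ^ ((N - 1 - r%:Z) * (A%:Z - r%:Z))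
          = q ^ N * q ^ ((N - 1 - r%:Z) * (A%:Z - r.+1%:Z)).
  by rewrite exprnP -!expfzDr //; congr (_ ^ _); lia.
rewrite /qsum_term qbinomS // mulrDl mulrDl eN eA; congr (_ + _).
transitivity (qbinom q A r.+1 * qterm q x (N - 1 - r%:Z)
              * (q ^+ r.+1 * q ^ ((N - 1 - r%:Z) * (A%:Z - r%:Z)))); first by ring.
by rewrite ex; ring.
Qed.

Lemma qsumS A N : qsum A.+1 N = q ^ N * qsum A N + qsum A (N - 1).
Proof.
rewrite /qsum mulr_sumr -big_split /=.
apply: (big_ord_pascal (g := fun r => q ^ N * qsum_term A N r)) => [|r|].
- exact: qsum_term_S0.
- exact: qsum_term_SS.
- by rewrite /qsum_term qbinom_small // !mul0r mulr0.
Qed.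

Lemma qsumSS A N :
  qsum A.+2 N = q ^ (2 * N) * qsum A N
                + (1 + q) * q ^ (N - 1) * qsum A (N - 1) + qsum A (N - 2).
Proof.
have e2N : q ^ (2 * N) = q ^ N * q ^ N by rewrite -expfzDr //; congr (_ ^ _); ring.
have eN : q ^ N = q * q ^ (N - 1).
  by rewrite -[q in q * _]expr1z -expfzDr //; congr (_ ^ _); ring.
rewrite !qsumS (_ : N - 1 - 1 = N - 2); last by ring.
by rewrite e2N {1 3}eN; ring.
Qed.

Let q2_neq0 : q ^+ 2 != 0. Proof. exact: expf_neq0. Qed.

Let q2_nonroot m : (0 < m)%N -> 1 - (q ^+ 2) ^+ m != 0.
Proof. by move=> m_gt0; rewrite -exprM q_nonroot // muln_gt0. Qed.

Let coef a N j := qbinom (q ^+ 2) a j * q ^ (2 * (j%:Z * (j%:Z + a%:Z - N + 2))) * x ^+ j.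
Let shift a j := x * q ^ (2 * (a%:Z - j%:Z)).

Lemma q2sum_term_rec a N j :
  q ^ (2 * N) * q2sum_term a N j + (1 + q) * q ^ (N - 1) * q2sum_term a (N - 1) j
  + q2sum_term a (N - 2) j
  = coef a N j * (qterm q (shift a j * q ^+ 2) (N - 2 * j%:Z)
    + q ^ (2 * (2 - (N - 2 * j%:Z))) * shift a j * qterm q (shift a j) (N - 2 * j%:Z - 2)).
Proof.
rewrite -qterm_rec // /q2sum_term /coef -/(shift a j).
have -> : N - 1 - 2 * j%:Z = N - 2 * j%:Z - 1 by ring.
have -> : N - 2 - 2 * j%:Z = N - 2 * j%:Z - 2 by ring.
set E := 2 * (j%:Z * (j%:Z + a%:Z - N + 2)).
have e0 : q ^ (2 * N) * q ^ (2 * (j%:Z * (j%:Z + a%:Z - N)))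
          = q ^ E * q ^ (2 * (N - 2 * j%:Z)).
  by rewrite -!expfzDr //; congr (_ ^ _); rewrite /E; ring.
have e1 : q ^ (N - 1) * q ^ (2 * (j%:Z * (j%:Z + a%:Z - (N - 1))))
          = q ^ E * q ^ (N - 2 * j%:Z - 1).
  by rewrite -!expfzDr //; congr (_ ^ _); rewrite /E; ring.
have e2 : q ^ (2 * (j%:Z * (j%:Z + a%:Z - (N - 2)))) = q ^ E.
  by congr (_ ^ _); rewrite /E; ring.
rewrite e2; set T := qterm q (shift a j).
transitivity (qbinom (q ^+ 2) a j * x ^+ j
  * (q ^ (2 * N) * q ^ (2 * (j%:Z * (j%:Z + a%:Z - N))) * T (N - 2 * j%:Z)
     + (1 + q) * (q ^ (N - 1) * q ^ (2 * (j%:Z * (j%:Z + a%:Z - (N - 1)))))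
       * T (N - 2 * j%:Z - 1)
     + q ^ E * T (N - 2 * j%:Z - 2))); first by ring.
by rewrite e0 e1; ring.
Qed.

Lemma q2sum_term_S0 a N :
  q2sum_term a.+1 N 0 = coef a N 0 * qterm q (shift a 0 * q ^+ 2) (N - 2 * 0%:Z).
Proof.
rewrite /q2sum_term /coef /shift !qbinom0 !expr0 !mulr1 !mul1r.
have -> : x * q ^ (2 * (a.+1%:Z - 0%:Z)) = x * q ^ (2 * (a%:Z - 0%:Z)) * q ^+ 2.
  by rewrite -mulrA exprnP -expfzDr //; congr (_ * _ ^ _); lia.
by congr (_ ^ _ * _); lia.
Qed.

Lemma q2sum_term_SS a N j :
  q2sum_term a.+1 N j.+1
  = coef a N j.+1 * qterm q (shift a j.+1 * q ^+ 2) (N - 2 * j.+1%:Z)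
    + coef a N j * (q ^ (2 * (2 - (N - 2 * j%:Z))) * shift a j
                    * qterm q (shift a j) (N - 2 * j%:Z - 2)).
Proof.
rewrite /q2sum_term /coef qbinomS //.
set y := shift a j; set T := qterm q y (N - 2 * j%:Z - 2).
have -> : x * q ^ (2 * (a.+1%:Z - j.+1%:Z)) = y.
  by rewrite /y /shift; congr (_ * _ ^ _); lia.
have -> : shift a j.+1 * q ^+ 2 = y.
  by rewrite /y /shift -mulrA exprnP -expfzDr //; congr (_ * _ ^ _); lia.
have -> : N - 2 * j.+1%:Z = N - 2 * j%:Z - 2 by lia.
rewrite -/T.
have e1 : (q ^+ 2) ^+ j.+1 * q ^ (2 * (j.+1%:Z * (j.+1%:Z + a.+1%:Z - N)))
          = q ^ (2 * (j.+1%:Z * (j.+1%:Z + a%:Z - N + 2))).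
  by rewrite -exprM exprnP -expfzDr //; congr (_ ^ _); lia.
have e2 : q ^ (2 * (j.+1%:Z * (j.+1%:Z + a.+1%:Z - N))) * x ^+ j.+1
          = q ^ (2 * (j%:Z * (j%:Z + a%:Z - N + 2))) * x ^+ j
            * (q ^ (2 * (2 - (N - 2 * j%:Z))) * y).
  rewrite /y /shift exprSr.
  have -> : q ^ (2 * (j.+1%:Z * (j.+1%:Z + a.+1%:Z - N)))
            = q ^ (2 * (j%:Z * (j%:Z + a%:Z - N + 2)))
              * (q ^ (2 * (2 - (N - 2 * j%:Z))) * q ^ (2 * (a%:Z - j%:Z))).
    by rewrite -!expfzDr //; congr (_ ^ _); lia.
  by ring.
transitivity ((q ^+ 2) ^+ j.+1 * q ^ (2 * (j.+1%:Z * (j.+1%:Z + a.+1%:Z - N)))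
                * (qbinom (q ^+ 2) a j.+1 * x ^+ j.+1 * T)
              + qbinom (q ^+ 2) a j * T
                * (q ^ (2 * (j.+1%:Z * (j.+1%:Z + a.+1%:Z - N))) * x ^+ j.+1));
  first by ring.
by rewrite e1 e2; ring.
Qed.

Lemma q2sumS a N :
  q2sum a.+1 N = q ^ (2 * N) * q2sum a N
                 + (1 + q) * q ^ (N - 1) * q2sum a (N - 1) + q2sum a (N - 2).
Proof.
rewrite /q2sum !mulr_sumr -!big_split /=.
under [RHS]eq_bigr do rewrite q2sum_term_rec mulrDr.
apply: (big_ord_pascal
  (g := fun j => coef a N j * qterm q (shift a j * q ^+ 2) (N - 2 * j%:Z))
  (h := fun j => coef a N j * (q ^ (2 * (2 - (N - 2 * j%:Z))) * shift a j
                               * qterm q (shift a j) (N - 2 * j%:Z - 2)))) => [|j|].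
- exact: q2sum_term_S0.
- exact: q2sum_term_SS.
- by rewrite /coef qbinom_small // !mul0r.
Qed.

Lemma q2sum_qsum a N : q2sum a N = qsum (2 * a) N.
Proof.
elim: a N => [|a IH] N.
  rewrite /q2sum /qsum !big_ord1 /q2sum_term /qsum_term !qbinom0 expr0 mulr1.
  have -> : x * q ^ (2 * (0%:Z - 0%:Z)) = x by rewrite subrr mulr0 expr0z mulr1.
  have -> : N - 2 * 0%:Z = N - 0%:Z by lia.
  by congr (_ * _ ^ _ * _) => /=; lia.
by rewrite (_ : 2 * a.+1 = (2 * a).+2)%N ?q2sumS ?qsumSS ?IH //; lia.
Qed.

End QSums.

Section ExplicitTerms.

Variables (F : fieldType) (q : F).
Hypothesis q_neq0 : q != 0.

Lemma q2sum_term_explicit a i k j : (j <= k)%N ->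
  qbinom (q ^+ 2) a j
  * q ^ (2 * (k%:Z - j%:Z) ^+ 2 - (k%:Z - j%:Z) + ((2 * (a + i))%N%:Z - 1) * j%:Z - 1)
  * (qpoch (q ^ ((2 * (a + i))%N%:Z + 2 - 4 * k%:Z + 2 * j%:Z)) (q ^+ 2) (2 * k - 2 * j)
     / qpoch q q (2 * k - 2 * j))
  = q ^ (2 * k%:Z ^+ 2 - k%:Z - 1) * q2sum_term q (q ^ (2 * i%:Z)) a (2 * k)%N j.
Proof.
move=> le_jk; rewrite /q2sum_term.
have -> : (2 * k)%N%:Z - 2 * j%:Z = (2 * k - 2 * j)%N by lia.
rewrite /qterm.
have -> : q ^ (2 * i%:Z) * q ^ (2 * (a%:Z - j%:Z)) * q ^ (2 * (1 - (2 * k - 2 * j)%N%:Z))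
          = q ^ ((2 * (a + i))%N%:Z + 2 - 4 * k%:Z + 2 * j%:Z).
  by rewrite -!expfzDr //; congr (_ ^ _); lia.
rewrite [_ ^+ j]exprnP exprz_exp.
have -> : q ^ (2 * (k%:Z - j%:Z) ^+ 2 - (k%:Z - j%:Z) + ((2 * (a + i))%N%:Z - 1) * j%:Z - 1)
          = q ^ (2 * k%:Z ^+ 2 - k%:Z - 1)
            * (q ^ (2 * (j%:Z * (j%:Z + a%:Z - (2 * k)%N%:Z))) * q ^ (2 * i%:Z * j%:Z)).
  by rewrite -!expfzDr //; congr (_ ^ _); lia.
by ring.
Qed.

Lemma qsum_term_explicit a i k r : (r <= 2 * k)%N ->
  qbinom q (2 * a) r
  * q ^ ((2 * k%:Z - r%:Z) * ((2 * (a + i))%N%:Z - 2 * i%:Z - r%:Z))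
  * ((\prod_(0 <= m < 2 * k - r) (1 - q ^ (2 * (i%:Z + r%:Z + 1 - 2 * k%:Z + m%:Z))))
     / \prod_(1 <= m < (2 * k - r).+1) (1 - q ^+ m))
  = qsum_term q (q ^ (2 * i%:Z)) (2 * a) (2 * k)%N r.
Proof.
move=> le_r2k; rewrite /qsum_term.
have -> : (2 * k)%N%:Z - r%:Z = (2 * k - r)%N by lia.
rewrite /qterm; congr (_ * _ ^ (_ * _) * (_ / _)); try lia.
  rewrite /qpoch big_mkord; apply: eq_bigr => m _; congr (1 - _).
  by rewrite -exprM !exprnP -!expfzDr //; congr (_ ^ _); lia.
by rewrite big_add1 /= /qpoch big_mkord; apply: eq_bigr => m _; rewrite exprS.
Qed.

End ExplicitTerms.

Lemma qX_neq0 : qX != 0.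
Proof. by rewrite tofrac_eq0 polyX_eq0. Qed.

Lemma qX_nonroot m : (0 < m)%N -> 1 - qX ^+ m != 0.
Proof.
move=> m_gt0; rewrite /qX -tofracXn -tofrac1 -tofracB tofrac_eq0.
apply/eqP => /(congr1 (horner^~ 0)).
rewrite hornerD hornerN hornerXn hornerC expr0n eqn0Ngt m_gt0 subr0 horner0.
by move/eqP; rewrite oner_eq0.
Qed.

Theorem mainTheorem11 (n k i : nat) :
  ~~ odd n -> (1 <= k)%N -> (k <= n./2)%N -> (1 <= i)%N -> (i <= n./2)%N ->
  \sum_(0 <= j < k.+1)
     qbinom (qX ^+ 2) (n./2 - i) j
     * qX ^ (2 * (k%:Z - j%:Z) ^+ 2 - (k%:Z - j%:Z) + (n%:Z - 1) * j%:Z - 1)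
     * (qpoch (qX ^ (n%:Z + 2 - 4 * k%:Z + 2 * j%:Z)) (qX ^+ 2) (2 * k - 2 * j)
        / qpoch qX qX (2 * k - 2 * j))
  =
  qX ^ (2 * k%:Z ^+ 2 - k%:Z - 1)
  * \sum_(0 <= r < (2 * k).+1)
      qbinom qX (n - 2 * i) r
      * qX ^ ((2 * k%:Z - r%:Z) * (n%:Z - 2 * i%:Z - r%:Z))
      * ((\prod_(0 <= m < 2 * k - r)
            (1 - qX ^ (2 * (i%:Z + r%:Z + 1 - 2 * k%:Z + m%:Z))))
         / \prod_(1 <= m < (2 * k - r).+1) (1 - qX ^+ m)).
Proof.
move=> n_even _ _ _ le_i_half.
have [a ->] : exists a, n = (2 * (a + i))%N.
  exists (n./2 - i)%N; move: (odd_double_half n).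
  by rewrite (negbTE n_even) add0n -mul2n; lia.
rewrite mul2n doubleK addnK -mul2n (_ : (2 * (a + i) - 2 * i = 2 * a)%N); last by lia.
rewrite !big_mkord.
under eq_bigr => j _ do rewrite (@q2sum_term_explicit _ _ qX_neq0 a i k j (ltn_ord j)).
under [in RHS]eq_bigr => r _ do rewrite (@qsum_term_explicit _ _ qX_neq0 a i k r (ltn_ord r)).
by rewrite -mulr_sumr -q2sum_trunc -qsum_trunc (q2sum_qsum _ qX_neq0 qX_nonroot).
Qed.
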